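(* Let $n$ and $M$ be positive integers with $M$ dividing $n$, let $N=n/M$, and let $\lambda>0$. Let $\{X_{c,i}: 1\le c\le N,\ 1\le i\le M\}$ be i.i.d. exponential random variables with rate $\lambda$, and define $$\hat V_c=\sum_{i=1}^{M}X_{c,i},\qquad Y_{III}=\max_{1\le c\le N}\hat V_c .$$ Let $\bar{\bar U}_1,\dots,\bar{\bar U}_M$ be i.i.d. random variables, each distributed as the maximum $X_{N:N}$ of $N=n/M$ i.i.d. exponential random variables with rate $\lambda$, and set $\bar{\bar V}=\sum_{i=1}^M\bar{\bar U}_i$. Then $Y_{III}\le\bar{\bar V}$ in the usual stochastic order, i.e. $\Pr(Y_{III}>t)\le\Pr(\bar{\bar V}>t)$ for every real $t$.
   Context: Model: $n$ nodes in a fixed square area are divided into $N=n/M$ cells of $M$ nodes each. In Phase III of the transmission scheme, cells operate in parallel; within each cell, $M$ received packets are relayed one at a time to their intended recipients in the cell, each intra-cell transmission delay being i.i.d. exponential with rate $\lambda$. Thus $\hat V_c$ is the time for cell $c$ to finish Phase III and $Y_{III}$ (the duration of Phase III) is the time until the slowest cell finishes. For random variables $X_1,\dots,X_N$, $X_{k:N}$ denotes the $k$-th smallest. *)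

From HB Require Import structures.
From mathcomp Require Import all_boot all_order all_algebra.
From mathcomp Require Import all_classical all_reals all_analysis.
Set Implicit Arguments. Unset Strict Implicit. Unset Printing Implicit Defensive.
Import Order.TTheory GRing.Theory Num.Theory.
Local Open Scope classical_set_scope.
Local Open Scope ring_scope.

Definition mutually_independent {d} {T : measurableType d} {R : realType}
  (P : probability T R) (I : finType) (X : I -> T -> R) : Prop :=
  forall B : I -> set R, (forall i, measurable (B i)) ->
    P (\bigcap_(i in [set: I]) (X i @^-1` B i)) =
    (\prod_(i : I) P (X i @^-1` B i))%E.

Definition is_exponential {d} {T : measurableType d} {R : realType}
  (P : probability T R) (lambda : R) (X : T -> R) : Prop :=
  forall A : set R, measurable A -> P (X @^-1` A) = exponential_prob lambda A.

(* Maximum of a finite family indexed by 'I_N (exact maximum when N > 0). *)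
Definition maxf {R : realType} (N : nat) (f : 'I_N -> R) : R :=
  \big[Num.max/ head 0 [seq f i | i <- enum 'I_N]]_(i < N) f i.

From HB Require Import structures.
From mathcomp Require Import all_boot all_order all_algebra.
From mathcomp Require Import all_classical all_reals all_analysis.
Import Order.TTheory GRing.Theory Num.Theory.
Local Open Scope classical_set_scope.
Local Open Scope ring_scope.

(* Let W_i := max_c X_{c,i} be the column maxima.  Pointwise
   max_c sum_i X_{c,i} <= sum_i W_i, so it suffices that the vector (W_i)_i has
   the same joint law as (U_i)_i.  Both vectors have independent coordinates,
   each distributed as the maximum of N independent copies of X_{1,1}, so the
   two laws agree on the orthants prod_i ]-oo, q_i[; orthants form a pi-system
   generating the Borel sets of R^M, hence the laws coincide.  Nothing about the
   exponential law is used beyond the X_{c,i} being i.i.d. *)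

Section maxf.
Context {R : realType} {N : nat}.
Implicit Type f : 'I_N -> R.

Lemma maxf_ge f c : f c <= maxf f.
Proof.
rewrite /maxf; have : c \in index_enum 'I_N by rewrite mem_index_enum.
elim: (index_enum _) => [//|a r IH].
rewrite inE big_cons => /orP[/eqP <-|/IH cr].
  by rewrite le_max lexx.
by rewrite le_max cr orbT.
Qed.

Hypothesis N_gt0 : (0 < N)%N.

Lemma maxf_attained f : exists c, maxf f = f c.
Proof.
apply: (big_ind (fun y => exists c, y = f c)).
- case E: (enum 'I_N) => [|c s] /=; last by exists c.
  by exfalso; move: N_gt0; rewrite -(size_enum_ord N) E.
- by move=> x y [c1 ->] [c2 ->]; rewrite /Num.max; case: ifP; eexists.
- by move=> c _; exists c.
Qed.

Lemma maxf_ltP f r : maxf f < r <-> forall c, f c < r.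
Proof.
split=> [fr c|fr]; first exact: le_lt_trans (maxf_ge f c) fr.
by have [c ->] := maxf_attained f; exact: fr.
Qed.

Lemma le_maxf_sum (M : nat) (f : 'I_N -> 'I_M -> R) :
  maxf (fun c => \sum_(i < M) f c i) <= \sum_(i < M) maxf (fun c => f c i).
Proof.
have [c ->] := maxf_attained (fun c => \sum_(i < M) f c i).
by apply: ler_sum => i _; exact: maxf_ge.
Qed.

End maxf.

Lemma measurable_maxf {R : realType} d (T : measurableType d) N
    (g : 'I_N -> T -> R) :
  (forall c, measurable_fun setT (g c)) ->
  measurable_fun setT (fun w => maxf (fun c => g c w)).
Proof.
move=> mg; rewrite /maxf; elim: (index_enum _) => [|a r IH].
  under eq_fun do rewrite big_nil.
  by case: (enum 'I_N) => [|c s] /=; [exact: measurable_cst|exact: mg].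
under eq_fun do rewrite big_cons.
exact: measurable_realfun.measurable_maxr.
Qed.

Lemma measurable_superlevel_set {R : realType} d (T : measurableType d)
    (f : T -> R) (t : R) :
  measurable_fun setT f -> measurable [set w | t < f w].
Proof.
move=> mf; rewrite (_ : [set w | _] = setT `&` f @^-1` `]t, +oo[).
  exact: mf (measurable_itv _).
by apply/seteqP; split=> w /=; rewrite in_itv /= andbT // => -[].
Qed.

Section orthant.
Context {R : realType} {M : nat}.
Implicit Type q : 'I_M -> R.

Definition orthant q : set (M.-tuple R) :=
  \bigcap_(i in [set: 'I_M]) ((fun x => tnth x i) @^-1` `]-oo, q i[).

Definition orthants : set (set (M.-tuple R)) := range orthant.

Lemma measurable_orthant q : measurable (orthant q).
Proof.
apply: fin_bigcap_measurable => [|i _]; first exact: finite_finset.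
by rewrite -[X in measurable X]setTI; exact: measurable_tnth (measurable_itv _).
Qed.

Lemma orthantI q1 q2 :
  orthant q1 `&` orthant q2 = orthant (fun i => Num.min (q1 i) (q2 i)).
Proof.
apply/seteqP; split=> x /=.
  move=> [x1 x2] i _; move: (x1 i I) (x2 i I).
  by rewrite /= !in_itv /= lt_min => -> ->.
move=> x12; split=> i _; have := x12 i I;
  by rewrite /= !in_itv /= lt_min => /andP[].
Qed.

Lemma orthants_setI_closed : setI_closed orthants.
Proof.
move=> _ _ [q1 _ <-] [q2 _ <-]; rewrite orthantI.
by exists (fun i => Num.min (q1 i) (q2 i)).
Qed.

Lemma exists_nat_gt_tnth (x : M.-tuple R) :
  exists k : nat, forall i, tnth x i < k%:R.
Proof.
exists (Num.truncn (maxf (tnth x))).+1 => i.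
exact: le_lt_trans (maxf_ge _ i) (truncnS_gt _).
Qed.

Lemma bigcup_orthant_nat :
  \bigcup_(k in [set: nat]) orthant (fun=> k%:R) = setT.
Proof.
apply/seteqP; split=> // x _; have [k xk] := exists_nat_gt_tnth x.
by exists k => // i _; rewrite /= in_itv /=.
Qed.

Lemma preimage_tnth_bigcup_orthant i (r : R) :
  (fun x => tnth x i) @^-1` `]-oo, r[ =
  \bigcup_(k in [set: nat]) orthant (fun j => if j == i then r else k%:R).
Proof.
apply/seteqP; split=> x /=; last first.
  by move=> [k _ /(_ i I)]; rewrite /= eqxx.
move=> xr; have [k xk] := exists_nat_gt_tnth x.
by exists k => // j _; rewrite /= in_itv /=; case: eqP => [->|]; rewrite ?xk.
Qed.

Lemma sigma_orthants_preimage_tnth i (C : set R) :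
  measurable C -> <<s orthants >> ((fun x => tnth x i) @^-1` C).
Proof.
pose G := measurable_realfun.RGenInftyO.G.
pose S := image_set_system setT (fun x : M.-tuple R => tnth x i)
  <<s orthants >>.
have [_ _ sigmaU] := @smallest_sigma_algebra _ [set: M.-tuple R] orthants.
have : <<s @G R >> `<=` S.
  apply: smallest_sub; first exact/sigma_algebra_image/smallest_sigma_algebra.
  move=> _ [r ->].
  rewrite /S /image_set_system /= setTI preimage_tnth_bigcup_orthant.
  by apply: sigmaU => k; apply: sub_sigma_algebra; eexists.
move=> GS mC; have measurableE : @measurable _ R = <<s @G R >>.
  exact: measurable_realfun.RGenInftyO.measurableE.
have /GS : <<s @G R >> C by rewrite -measurableE.
by rewrite /S /image_set_system /= setTI.
Qed.

Lemma measurable_tupleE : @measurable _ (M.-tuple R) = <<s orthants >>.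
Proof.
apply/seteqP; split.
- apply: smallest_sub; first exact: smallest_sigma_algebra.
  rewrite -bigcup_seq => _ [i _ [C mC <-]]; rewrite setTI.
  exact: sigma_orthants_preimage_tnth.
- apply: smallest_sub; first exact: sigma_algebra_measurable.
  by move=> _ [q _ <-]; exact: measurable_orthant.
Qed.

Lemma orthant_measure_unique {d} {T : measurableType d}
    (P : probability T R) (f g : T -> M.-tuple R) :
  measurable_fun setT f -> measurable_fun setT g ->
  (forall q, P (f @^-1` orthant q) = P (g @^-1` orthant q)) ->
  forall A, measurable A -> P (f @^-1` A) = P (g @^-1` A).
Proof.
move=> mf mg fg A mA.
apply: (measure_unique orthants (fun k => orthant (fun=> k%:R))
  measurable_tupleE orthants_setI_closed _ bigcup_orthant_nat
  (pushforward P f) (pushforward P g)) => //.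
- by move=> k; exists (fun=> k%:R).
- by move=> _ [q _ <-]; exact: fg.
- move=> k; rewrite /pushforward ltey_eq fin_num_measure //.
  by rewrite -[X in measurable X]setTI; exact: mf (measurable_orthant _).
Qed.

End orthant.

Section independent_coordinates.
Local Open Scope ereal_scope.
Context {d} {T : measurableType d} {R : realType} (P : probability T R).

Definition tuple_of_fun {M} (Y : 'I_M -> T -> R) : T -> M.-tuple R :=
  fun w => [tuple Y i w | i < M].

Lemma measurable_tuple_of_fun M (Y : 'I_M -> T -> R) :
  (forall i, measurable_fun setT (Y i)) ->
  measurable_fun setT (tuple_of_fun Y).
Proof.
move=> mY; apply/measurable_fun_tnthP => i.
by rewrite (_ : _ \o _ = Y i) //; apply/funext => w; rewrite /= tnth_mktuple.
Qed.

Lemma sum_tuple_of_fun M (Y : 'I_M -> T -> R) w :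
  (\sum_(i < M) tnth (tuple_of_fun Y w) i = \sum_(i < M) Y i w)%R.
Proof. by apply: eq_bigr => i _; rewrite tnth_mktuple. Qed.

Lemma preimage_tuple_of_fun_orthant M (Y : 'I_M -> T -> R) (q : 'I_M -> R) :
  tuple_of_fun Y @^-1` orthant q =
  \bigcap_(i in [set: 'I_M]) (Y i @^-1` `]-oo, q i[).
Proof.
by apply/seteqP; split=> w /= Yq i _; have := Yq i I; rewrite /= tnth_mktuple.
Qed.

Lemma preimage_maxf_lt N (Z : 'I_N -> T -> R) r : (0 < N)%N ->
  (fun w => maxf (fun c => Z c w)) @^-1` `]-oo, r[ =
  \bigcap_(c in [set: 'I_N]) (Z c @^-1` `]-oo, r[).
Proof.
move=> N_gt0; apply/seteqP; split=> w /=; rewrite in_itv /=.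
  by move/(maxf_ltP N_gt0) => Zr c _; rewrite /= in_itv /= Zr.
by move=> Zr; apply/(maxf_ltP N_gt0) => c; have := Zr c I; rewrite /= in_itv.
Qed.

Lemma prob_tuple_orthant M (Y : 'I_M -> T -> R) (q : 'I_M -> R) :
  mutually_independent P Y ->
  P (tuple_of_fun Y @^-1` orthant q) = \prod_(i < M) P (Y i @^-1` `]-oo, q i[).
Proof.
by move=> indY; rewrite preimage_tuple_of_fun_orthant indY.
Qed.

Variable mu : set R -> \bar R.

Lemma prob_maxf_lt {N} (Z : 'I_N -> T -> R) r : (0 < N)%N ->
  mutually_independent P Z ->
  (forall c A, measurable A -> P (Z c @^-1` A) = mu A) ->
  P ((fun w => maxf (fun c => Z c w)) @^-1` `]-oo, r[) =
  \prod_(c < N) mu `]-oo, r[.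
Proof.
move=> N_gt0 indZ lawZ.
rewrite preimage_maxf_lt // indZ => [|c]; last exact: measurable_itv.
by apply: eq_bigr => c _; rewrite lawZ //; exact: measurable_itv.
Qed.

Lemma prob_column_maxf_orthant {N M} (X : 'I_N -> 'I_M -> T -> R)
    (q : 'I_M -> R) :
  (0 < N)%N ->
  mutually_independent P (fun p : 'I_N * 'I_M => X p.1 p.2) ->
  (forall c i A, measurable A -> P (X c i @^-1` A) = mu A) ->
  P (tuple_of_fun (fun i w => maxf (fun c => X c i w)) @^-1` orthant q) =
  \prod_(i < M) \prod_(c < N) mu `]-oo, q i[.
Proof.
move=> N_gt0 indX lawX.
have -> : tuple_of_fun (fun i w => maxf (fun c => X c i w)) @^-1` orthant q =
    \bigcap_(p in [set: 'I_N * 'I_M]) (X p.1 p.2 @^-1` `]-oo, q p.2[).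
  rewrite preimage_tuple_of_fun_orthant; apply/seteqP; split=> w /= Xq.
    move=> [c i] _; have := Xq i I.
    by rewrite /= !in_itv /= => /(maxf_ltP N_gt0).
  move=> i _; rewrite /= in_itv /=; apply/(maxf_ltP N_gt0) => c.
  by have := Xq (c, i) I; rewrite /= in_itv.
rewrite indX => [|p]; last exact: measurable_itv.
rewrite exchange_big pair_bigA /=; apply: eq_bigr => -[c i] _.
by rewrite lawX //; exact: measurable_itv.
Qed.

Lemma column_maxf_law {N M} (X : 'I_N -> 'I_M -> T -> R) (U : 'I_M -> T -> R)
    (A : set (M.-tuple R)) :
  (0 < N)%N ->
  (forall c i, measurable_fun setT (X c i)) ->
  mutually_independent P (fun p : 'I_N * 'I_M => X p.1 p.2) ->
  (forall c i A, measurable A -> P (X c i @^-1` A) = mu A) ->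
  (forall i, measurable_fun setT (U i)) ->
  mutually_independent P U ->
  (forall i r, P (U i @^-1` `]-oo, r[) = \prod_(c < N) mu `]-oo, r[) ->
  measurable A ->
  P (tuple_of_fun (fun i w => maxf (fun c => X c i w)) @^-1` A) =
  P (tuple_of_fun U @^-1` A).
Proof.
move=> N_gt0 mX indX lawX mU indU lawU; apply: orthant_measure_unique => [||q].
- by apply: measurable_tuple_of_fun => i; exact: measurable_maxf.
- exact: measurable_tuple_of_fun.
rewrite prob_column_maxf_orthant // prob_tuple_orthant //.
by apply: eq_bigr => i _; rewrite lawU.
Qed.

End independent_coordinates.

Theorem lemma2 (R : realType) (n M : nat) (lambda : R)
  (d : measure_display) (T : measurableType d) (P : probability T R)
  (d' : measure_display) (T' : measurableType d') (P' : probability T' R)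
  (X : 'I_(n %/ M) -> 'I_M -> {RV P >-> R})
  (U : 'I_M -> {RV P >-> R})
  (Z : 'I_(n %/ M) -> {RV P' >-> R}) :
  (0 < n)%N -> (0 < M)%N -> (M %| n)%N -> 0 < lambda ->
  (* the X_{c,i} are i.i.d. Exp(lambda) *)
  mutually_independent P (fun p : 'I_(n %/ M) * 'I_M => (X p.1 p.2 : T -> R)) ->
  (forall c i, is_exponential P lambda (X c i)) ->
  (* Z_1..Z_N are i.i.d. Exp(lambda) (on some probability space), so that
     maxf Z is distributed as X_{N:N} *)
  mutually_independent P' (fun c => (Z c : T' -> R)) ->
  (forall c, is_exponential P' lambda (Z c)) ->
  (* the U_i are i.i.d., each distributed as X_{N:N} *)
  mutually_independent P (fun i => (U i : T -> R)) ->
  (forall i (A : set R), measurable A ->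
     P ((U i : T -> R) @^-1` A) =
     P' ((fun w' => maxf (fun c => Z c w')) @^-1` A)) ->
  forall t : R,
    (P [set w | (t < maxf (fun c => \sum_(i < M) X c i w))%R] <=
    P [set w | (t < \sum_(i < M) U i w)%R])%E.
Proof.
move=> n_gt0 M_gt0 Mn _ indX expX indZ expZ indU lawU t.
have N_gt0 : (0 < n %/ M)%N by rewrite divn_gt0 // dvdn_leq.
have mX c i : measurable_fun setT (X c i : T -> R) by exact: measurable_funP.
pose S := [set x : M.-tuple R | t < \sum_(i < M) tnth x i].
have mS : measurable S.
  apply: measurable_superlevel_set; apply: measurable_sum => i.
  exact: measurable_tnth.
have -> : [set w | t < \sum_(i < M) U i w] =
    tuple_of_fun (fun i => U i : T -> R) @^-1` S.
  by apply/seteqP; split=> w; rewrite /S /= sum_tuple_of_fun.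
rewrite -(column_maxf_law _ _ _ _ _ N_gt0 mX indX expX _ indU) //; last first.
  move=> i r; rewrite lawU; last exact: measurable_itv.
  exact: prob_maxf_lt N_gt0 indZ expZ.
apply: le_measure; rewrite ?inE.
- apply: measurable_superlevel_set; apply: measurable_maxf => c.
  exact: measurable_sum.
- rewrite -[X in measurable X]setTI; apply: measurable_tuple_of_fun => //.
  by move=> i; exact: measurable_maxf.
- move=> w /= tlt; rewrite /S /= sum_tuple_of_fun.
  by apply: (lt_le_trans tlt); exact: le_maxf_sum.
Qed.
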